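(* Let $R$ be an $F$-finite $F$-pure ring of prime characteristic $p$ and $\mathfrak a,J$ ideals with $\mathfrak a\subseteq\sqrt J$. Then $\operatorname{ct}_J(\mathfrak a)=c^J(\mathfrak a)$ if and only if $c^{J_e}(\mathfrak a)=c^{J^{[p^e]}}(\mathfrak a)$ for every $e\in\mathbb N$.
   Context: $J_e=\{f\in R\mid \varphi(f^{1/p^e})\in J \text{ for all }\varphi\in\operatorname{Hom}_R(R^{1/p^e},R)\}$; $b^J_{\mathfrak a}(p^e)=\max\{t\in\mathbb N\mid\mathfrak a^t\not\subseteq J_e\}$ and $\operatorname{ct}_J(\mathfrak a)=\lim_e b^J_{\mathfrak a}(p^e)/p^e$. For ideals $\mathfrak a\subseteq\sqrt{\mathfrak b}$, $\nu^{\mathfrak b}_{\mathfrak a}(p^e)=\max\{m\in\mathbb N\mid\mathfrak a^m\not\subseteq\mathfrak b^{[p^e]}\}$ and $c^{\mathfrak b}(\mathfrak a)=\lim_e\nu^{\mathfrak b}_{\mathfrak a}(p^e)/p^e$; $J^{[p^e]}$ is the ideal generated by $p^e$-th powers of elements of $J$. *)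

From HB Require Import structures.
From mathcomp Require Import all_boot all_algebra.
From Stdlib Require Import Reals.
Set Implicit Arguments. Unset Strict Implicit. Unset Printing Implicit Defensive.
Import GRing.Theory.
Local Open Scope ring_scope.

Section Defs.
Variable A : comNzRingType.

Definition psubset (I K : A -> Prop) : Prop := forall x, I x -> K x.

Definition is_ideal (I : A -> Prop) : Prop :=
  I 0 /\ (forall x y, I x -> I y -> I (x + y)) /\ (forall r x, I x -> I (r * x)).

Definition gen_ideal (S : A -> Prop) : A -> Prop := fun x =>
  exists l : seq (A * A), (forall q, q \in l -> S q.2) /\
    x = \sum_(q <- l) q.1 * q.2.

Definition ideal_pow (a : A -> Prop) (t : nat) : A -> Prop :=
  gen_ideal (fun x => exists s : seq A,
    size s = t /\ (forall y, y \in s -> a y) /\ x = \prod_(y <- s) y).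

Definition frob_pow (J : A -> Prop) (q : nat) : A -> Prop :=
  gen_ideal (fun x => exists y, J y /\ x = y ^+ q).

Definition radical (J : A -> Prop) : A -> Prop := fun x => exists n, J (x ^+ n).

(* Elements of Hom_R(R^{1/p^e}, R): identifying R^{1/p^e} with R via
   x^{1/p^e} <-> x, these are additive maps phi : A -> A with
   phi (r^(p^e) x) = r phi(x). *)
Definition pe_linear (p e : nat) (phi : A -> A) : Prop :=
  (forall x y, phi (x + y) = phi x + phi y) /\
  (forall r x, phi (r ^+ (expn p e) * x) = r * phi x).

(* J_e = { f | phi(f^{1/p^e}) \in J for all phi in Hom_R(R^{1/p^e},R) } *)
Definition Je (p e : nat) (J : A -> Prop) : A -> Prop := fun f =>
  forall phi, pe_linear p e phi -> J (phi f).

Definition noetherian : Prop :=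
  forall I, is_ideal I -> exists s : seq A,
    forall x, I x <-> gen_ideal (fun y => y \in s) x.

(* F-finite: Noetherian and R^{1/p} is a finitely generated R-module. *)
Definition F_finite (p : nat) : Prop :=
  noetherian /\ exists g : seq A, forall x,
    exists l : seq (A * A), (forall q, q \in l -> q.2 \in g) /\
      x = \sum_(q <- l) q.1 ^+ p * q.2.

(* F-pure (for F-finite rings equivalently F-split): R -> R^{1/p} splits. *)
Definition F_pure (p : nat) : Prop :=
  exists phi, pe_linear p 1 phi /\ phi 1 = 1.

Definition is_max_nat (P : nat -> Prop) (m : nat) : Prop :=
  P m /\ forall n, P n -> leq n m.

Definition bJ (p : nat) (a J : A -> Prop) (e m : nat) : Prop :=
  is_max_nat (fun t => ~ psubset (ideal_pow a t) (Je p e J)) m.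

Definition nu (p : nat) (a b : A -> Prop) (e m : nat) : Prop :=
  is_max_nat (fun t => ~ psubset (ideal_pow a t) (frob_pow b (expn p e))) m.

Definition ct_is (p : nat) (a J : A -> Prop) (l : R) : Prop :=
  exists u : nat -> nat, (forall e, bJ p a J e (u e)) /\
    Un_cv (fun e => Rdiv (INR (u e)) (INR (expn p e))) l.

Definition c_is (p : nat) (a b : A -> Prop) (l : R) : Prop :=
  exists u : nat -> nat, (forall e, nu p a b e (u e)) /\
    Un_cv (fun e => Rdiv (INR (u e)) (INR (expn p e))) l.

End Defs.

(* The Frobenius inclusions J^[p^(e+e')] ⊆ (J_e)^[p^e'] ⊆ J_(e+e') trap ν^(J_e)_a(p^e')
   between b^J_a(p^(e+e')) and ν^J_a(p^(e+e')); dividing by p^e' and letting e' grow,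
   ct_J(a) = c^J(a) = l forces c^(J_e)(a) = p^e l, while c^(J^[p^e])(a) = p^e c^J(a)
   always holds.  Conversely, if a is generated by n elements and b = b^J_a(p^e), then
   a^(b+1) ⊆ J_e, and by the pigeonhole principle a^((b+1+n)q) ⊆ (J_e)^[q]; hence
   p^e c^J(a) = c^(J_e)(a) ≤ b+1+n.  Together with b ≤ ν^J_a(p^e) this squeezes b/p^e
   to c^J(a). *)

From HB Require Import structures.
From mathcomp Require Import all_boot all_algebra.
From Stdlib Require Import Reals Lra Classical ClassicalEpsilon.
From mathcomp Require Import zify.

Set Implicit Arguments. Unset Strict Implicit. Unset Printing Implicit Defensive.
Import GRing.Theory.

Section Sequences.
Local Open Scope R_scope.

Lemma Un_cv_squeeze (u v w : nat -> R) l :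
  (forall n, u n <= v n <= w n) -> Un_cv u l -> Un_cv w l -> Un_cv v l.
Proof.
move=> uvw cu cw eps eps_gt0.
have [N1 HN1] := cu eps eps_gt0; have [N2 HN2] := cw eps eps_gt0.
exists (Nat.max N1 N2) => n n_ge; rewrite /R_dist in HN1 HN2 *.
have /Rabs_def2 := HN1 n ltac:(lia); have /Rabs_def2 := HN2 n ltac:(lia).
by have := uvw n => ? ? ?; apply: Rabs_def1; lra.
Qed.

Lemma Un_cv_const c : Un_cv (fun _ => c) c.
Proof. by move=> eps eps_gt0; exists 0%nat => n _; rewrite /R_dist Rminus_diag Rabs_R0. Qed.

Lemma INR_expn_gt0 (q e : nat) : (0 < q)%nat -> 0 < INR (expn q e).
Proof. by move=> q_gt0; apply: lt_0_INR; apply/ltP; rewrite expn_gt0 q_gt0. Qed.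

Lemma Rdiv_INR_le (m n q : nat) : (m <= n)%nat -> INR m / INR q <= INR n / INR q.
Proof.
move=> /leP/le_INR le_mn; case: q => [|q]; first by rewrite /= Rdiv_0_r Rdiv_0_r; lra.
by apply: Rmult_le_compat_r => //; apply/Rlt_le/Rinv_0_lt_compat/lt_0_INR; lia.
Qed.

Lemma Un_cv_shift_scale (q : nat) (u : nat -> nat) l e : (0 < q)%nat ->
  Un_cv (fun n => INR (u n) / INR (expn q n)) l ->
  Un_cv (fun n => INR (u (e + n)%nat) / INR (expn q n)) (INR (expn q e) * l).
Proof.
move=> q_gt0 cu.
apply: Un_cv_ext (CV_mult _ _ _ _ (Un_cv_const (INR (expn q e))) (CV_shift' _ e _ cu)).
move=> n; rewrite plusE (addnC e n) expnD mult_INR.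
have := INR_expn_gt0 e q_gt0; have := INR_expn_gt0 n q_gt0 => ? ?.
by field; lra.
Qed.

Lemma Un_cv_div_expn (q : nat) C : (1 < q)%nat -> Un_cv (fun n => C / INR (expn q n)) 0.
Proof.
move=> q_gt1 eps eps_gt0; have [N HN] := INR_archimed eps (Rabs C) eps_gt0.
exists N => n n_ge; rewrite /R_dist Rminus_0_r.
have qn_gt0 := INR_expn_gt0 n (ltnW q_gt1).
have N_le : INR N <= INR (expn q n).
  by apply/le_INR/leP/(leq_trans _ (ltnW (ltn_expl n q_gt1))); lia.
rewrite /Rdiv Rabs_mult Rabs_inv (Rabs_pos_eq (INR _)); last lra.
apply: (Rmult_lt_reg_r (INR (expn q n))) => //; rewrite Rmult_assoc Rinv_l; last lra.
by have := Rabs_pos C; nra.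
Qed.

End Sequences.

Section Ideals.
Local Open Scope ring_scope.
Variable A : comNzRingType.
Implicit Types (I S T U : A -> Prop) (x y : A).

Lemma is_ideal0 I : is_ideal I -> I 0.
Proof. by case. Qed.

Lemma is_idealD I x y : is_ideal I -> I x -> I y -> I (x + y).
Proof. by case=> _ [+ _]; apply. Qed.

Lemma is_idealMl I r x : is_ideal I -> I x -> I (r * x).
Proof. by case=> _ [_ +]; apply. Qed.

Lemma is_idealMr I r x : is_ideal I -> I x -> I (x * r).
Proof. by rewrite mulrC; apply: is_idealMl. Qed.

Lemma gen_ideal_is_ideal S : is_ideal (gen_ideal S).
Proof.
split; [|split].
- by exists [::]; rewrite big_nil.
- move=> _ _ [l1 [S1 ->]] [l2 [S2 ->]]; exists (l1 ++ l2); rewrite big_cat.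
  by split=> // q; rewrite mem_cat => /orP[/S1|/S2].
- move=> r _ [l [Sl ->]]; exists [seq (r * q.1, q.2) | q <- l]; split.
  + by move=> _ /mapP[q /Sl Sq ->].
  + by rewrite big_map mulr_sumr; apply: eq_bigr => q _; rewrite mulrA.
Qed.

Lemma gen_ideal_gen S x : S x -> gen_ideal S x.
Proof.
by move=> Sx; exists [:: (1, x)]; rewrite big_seq1 mul1r; split=> // q /[!inE] /eqP->.
Qed.

Lemma gen_ideal_min S I : is_ideal I -> (forall x, S x -> I x) -> psubset (gen_ideal S) I.
Proof.
move=> idI SI _ [l [Sl ->]]; elim: l Sl => [|q l IHl] Sl.
  by rewrite big_nil; apply: is_ideal0.
rewrite big_cons; apply: is_idealD => //.
- by apply: is_idealMl => //; apply/SI/Sl/mem_head.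
- by apply: IHl => q' lq'; apply: Sl; rewrite inE lq' orbT.
Qed.

Lemma gen_ideal_mono S T : (forall x, S x -> T x) -> psubset (gen_ideal S) (gen_ideal T).
Proof.
by move=> ST; apply: gen_ideal_min (gen_ideal_is_ideal T) _ => x /ST /gen_ideal_gen.
Qed.

Lemma gen_idealM S T U x y : (forall u v, S u -> T v -> U (u * v)) ->
  gen_ideal S x -> gen_ideal T y -> gen_ideal U (x * y).
Proof.
move=> STU Sx Ty; have idU := gen_ideal_is_ideal U.
pose IT z := forall u, S u -> gen_ideal U (u * z).
have idIT : is_ideal IT.
  split; [|split] => [u _|z z' Iz Iz' u Su|r z Iz u Su].
  - by rewrite mulr0; apply: is_ideal0.
  - by rewrite mulrDr; apply: is_idealD (Iz u Su) (Iz' u Su).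
  - by rewrite mulrCA; apply: is_idealMl (Iz u Su).
have yIT := gen_ideal_min idIT (fun v Tv u Su => gen_ideal_gen (STU u v Su Tv)) Ty.
pose IS z := gen_ideal U (z * y).
have idIS : is_ideal IS.
  split; [|split] => [|z z' Iz Iz'|r z Iz]; rewrite /IS.
  - by rewrite mul0r; apply: is_ideal0.
  - by rewrite mulrDl; apply: is_idealD.
  - by rewrite -mulrA; apply: is_idealMl.
exact: gen_ideal_min idIS (fun u Su => yIT u Su) _ Sx.
Qed.

End Ideals.

Section IdealPowers.
Local Open Scope ring_scope.
Variable A : comNzRingType.
Implicit Types (I K a : A -> Prop) (s l : seq A).

Lemma frob_pow_gen I q y : I y -> frob_pow I q (y ^+ q).
Proof. by move=> Iy; apply: gen_ideal_gen; exists y. Qed.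

Lemma frob_pow_mono I K q : psubset I K -> psubset (frob_pow I q) (frob_pow K q).
Proof. by move=> IK; apply: gen_ideal_mono => _ [y [/IK Ky ->]]; exists y. Qed.

Lemma ideal_pow_antitone a m n : (m <= n)%nat -> psubset (ideal_pow a n) (ideal_pow a m).
Proof.
move=> le_mn; apply: gen_ideal_min (gen_ideal_is_ideal _) _ => _ [l [sl [al ->]]].
rewrite -(cat_take_drop m l) big_cat /=; apply: is_idealMr; first exact: gen_ideal_is_ideal.
apply: gen_ideal_gen; exists (take m l); rewrite size_takel ?sl //.
by split=> //; split=> // y /mem_take /al.
Qed.

Definition monomial_in s n : A -> Prop := fun x =>
  exists l, size l = n /\ {subset l <= s} /\ x = \prod_(y <- l) y.

Lemma ideal_pow_sub_monomials a s n :
  (forall x, a x <-> gen_ideal (fun y => y \in s) x) ->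
  psubset (ideal_pow a n) (gen_ideal (monomial_in s n)).
Proof.
move=> a_s; apply: gen_ideal_min (gen_ideal_is_ideal _) _ => _ [l [<- [al ->]]].
elim: l al => [|y l IHl] al; first by apply: gen_ideal_gen; exists [::].
rewrite big_cons; apply: (@gen_idealM _ (fun y => y \in s) (monomial_in s (size l))).
- move=> u _ su [l' [sl' [l's ->]]]; exists (u :: l'); rewrite big_cons /= sl'.
  by split=> //; split=> // z /[!inE] /orP[/eqP->|/l's].
- by apply/a_s/al/mem_head.
- by apply: IHl => z lz; apply/al; rewrite inE lz orbT.
Qed.

Lemma prod_count_mem (g : A) l :
  \prod_(y <- l) y = g ^+ count_mem g l * \prod_(y <- l | y != g) y.
Proof.
rewrite (bigID (pred1 g)) /= (eq_bigr (fun=> g)) => [|y /eqP //].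
by rewrite big_const_seq iter_mulr_1.
Qed.

Lemma prod_split_pow s l q : (0 < q)%nat -> {subset l <= s} ->
  exists l1 l2, [/\ \prod_(y <- l) y = (\prod_(y <- l1) y) ^+ q * \prod_(y <- l2) y,
    {subset l1 <= s}, size l = (q * size l1 + size l2)%nat & (size l2 <= size s * q)%nat].
Proof.
move=> q_gt0; elim: s l => [|g s IHs] l ls.
  case: l ls => [_|y l ls]; last by have := ls y (mem_head y l).
  by exists [::], [::]; rewrite !big_nil expr1n mulr1 muln0.
have l's : {subset [seq y <- l | y != g] <= s}.
  by move=> y; rewrite mem_filter => /andP[/negPf yg /ls]; rewrite inE yg.
have [l1 [l2 [prod_l' l1s size_l' size_l2]]] := IHs _ l's.
set c := count_mem g l.
exists (nseq (c %/ q) g ++ l1), (nseq (c %% q) g ++ l2); split.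
- rewrite (prod_count_mem g) -big_filter prod_l' !big_cat !big_nseq !iter_mulr_1 /= -/c.
  by rewrite {1}(divn_eq c q) exprD exprMn -exprM mulnC mulrACA.
- by move=> y /[!mem_cat] /orP[/nseqP[-> _]|/l1s]; rewrite inE ?eqxx // => ->; rewrite orbT.
- have -> : size l = (c + size [seq y <- l | y != g])%nat.
    by rewrite size_filter -(count_predC (pred1 g)).
  by rewrite size_l' !size_cat !size_nseq {1}(divn_eq c q); lia.
- by rewrite size_cat size_nseq /= mulSn leq_add // ltnW // ltn_pmod.
Qed.

Lemma ideal_pow_sub_frob_pow a I s m q :
  (forall x, a x <-> gen_ideal (fun y => y \in s) x) -> (0 < q)%nat ->
  psubset (ideal_pow a m) I -> psubset (ideal_pow a ((m + size s) * q)) (frob_pow I q).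
Proof.
move=> a_s q_gt0 amI x /(ideal_pow_sub_monomials a_s); move: x.
apply: gen_ideal_min (gen_ideal_is_ideal _) _ => _ [l [size_l [ls ->]]].
have [l1 [l2 [-> l1s size_l' size_l2]]] := prod_split_pow q_gt0 ls.
have m_le : (m <= size l1)%nat by rewrite -(leq_pmul2l q_gt0); nia.
rewrite -(cat_take_drop m l1) big_cat exprMn -mulrA.
apply: is_idealMr; first exact: gen_ideal_is_ideal.
apply/frob_pow_gen/amI/gen_ideal_gen; exists (take m l1); rewrite size_takel //.
by split=> //; split=> // y /mem_take /l1s ys; apply/a_s/gen_ideal_gen.
Qed.

End IdealPowers.

Section FrobeniusPowers.
Local Open Scope ring_scope.
Variables (A : comNzRingType) (p : nat).
Hypothesis pchar_p : p \in GRing.pchar A.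
Implicit Types (I J : A -> Prop) (x y : A).

Lemma exprD_pchar e x y : (x + y) ^+ expn p e = x ^+ expn p e + y ^+ expn p e.
Proof. by apply: exprDn_pchar; rewrite pnatX (pnatE _ (pcharf_prime pchar_p)) pchar_p. Qed.

Lemma expn_pchar_gt0 e : (0 < expn p e)%nat.
Proof. by rewrite expn_gt0 prime_gt0 // (pcharf_prime pchar_p). Qed.

Lemma frob_pow1 J x : is_ideal J -> frob_pow J 1 x <-> J x.
Proof.
move=> idJ; split; last by move=> Jx; rewrite -(expr1 x); apply: frob_pow_gen.
by move: x; apply: gen_ideal_min idJ _ => _ [y [Jy ->]]; rewrite expr1.
Qed.

Lemma frob_pow_frob_pow J e e' x :
  frob_pow (frob_pow J (expn p e)) (expn p e') x <-> frob_pow J (expn p (e + e')) x.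
Proof.
rewrite expnD; split.
- move: x; apply: gen_ideal_min (gen_ideal_is_ideal _) _ => _ [y [Jey ->]].
  pose K z := frob_pow J (expn p e * expn p e') (z ^+ expn p e').
  have idK : is_ideal K.
    split; [|split] => [|z z' Kz Kz'|r z Kz]; rewrite /K.
    - by rewrite expr0n eqn0Ngt expn_pchar_gt0; apply: is_ideal0 (gen_ideal_is_ideal _).
    - by rewrite exprD_pchar; apply: is_idealD (gen_ideal_is_ideal _) Kz Kz'.
    - by rewrite exprMn; apply: is_idealMl (gen_ideal_is_ideal _) Kz.
  move: y Jey; apply: gen_ideal_min idK _ => _ [j [Jj ->]].
  by rewrite /K -exprM; apply: frob_pow_gen.
- move: x; apply: gen_ideal_min (gen_ideal_is_ideal _) _ => _ [y [Jy ->]].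
  by rewrite exprM; do 2!apply: frob_pow_gen.
Qed.

Lemma pe_linear0 e (phi : A -> A) : pe_linear p e phi -> phi 0 = 0.
Proof. by case=> phiD _; apply/(addrI (phi 0)); rewrite -phiD !addr0. Qed.

Lemma Je_is_ideal e J : is_ideal J -> is_ideal (Je p e J).
Proof.
move=> idJ; split; [|split].
- by move=> phi /pe_linear0 ->; apply: is_ideal0.
- by move=> x y Jx Jy phi lin_phi; rewrite lin_phi.1; apply: is_idealD idJ (Jx _ _) (Jy _ _).
- move=> r x Jx phi [phiD phiZ]; apply: (Jx (fun z => phi (r * z))); split.
  + by move=> y z; rewrite mulrDr phiD.
  + by move=> s z; rewrite mulrCA phiZ.
Qed.

Lemma frob_pow_sub_Je e J : is_ideal J -> psubset (frob_pow J (expn p e)) (Je p e J).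
Proof.
move=> idJ; apply: gen_ideal_min (Je_is_ideal e idJ) _ => _ [y [Jy ->]] phi [_ phiZ].
by rewrite -(mulr1 (y ^+ _)) phiZ; apply: is_idealMr.
Qed.

Lemma frob_pow_Je_sub e e' J : is_ideal J ->
  psubset (frob_pow (Je p e J) (expn p e')) (Je p (e + e') J).
Proof.
move=> idJ; apply: gen_ideal_min (Je_is_ideal _ idJ) _ => _ [g [Jeg ->]] phi [phiD phiZ].
apply: (Jeg (fun x => phi (x ^+ expn p e'))); split=> [x y|r x].
- by rewrite exprD_pchar phiD.
- by rewrite exprMn -exprM -expnD phiZ.
Qed.

End FrobeniusPowers.

Section Maxima.
Implicit Types (P Q R : nat -> Prop).

Lemma is_max_nat_ext P Q m : (forall t, P t <-> Q t) -> is_max_nat P m -> is_max_nat Q m.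
Proof. by move=> PQ [Pm maxm]; split=> [|n /PQ /maxm //]; apply/PQ. Qed.

Lemma is_max_nat_unique P m n : is_max_nat P m -> is_max_nat P n -> m = n.
Proof. by move=> [Pm maxm] [Pn maxn]; apply/eqP; rewrite eqn_leq maxm // maxn. Qed.

Lemma is_max_nat_exists P t B : P t -> (forall n, P n -> (n <= B)%nat) ->
  exists m, is_max_nat P m.
Proof.
elim: B => [|B IHB] Pt leB.
  have /eqP t0 : t == 0%nat by rewrite -leqn0 leB.
  by exists 0%nat; split=> [|n /leB //]; rewrite -t0.
have [PB|PBn] := classic (P B.+1); first by exists B.+1.
apply: IHB Pt _ => n Pn; rewrite -ltnS ltn_neqAle leB // andbT.
by apply/eqP => nB; apply: PBn; rewrite -nB.
Qed.

Lemma is_max_nat_between P Q R u v :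
  (forall t, P t -> Q t) -> (forall t, Q t -> R t) -> is_max_nat P u -> is_max_nat R v ->
  exists w, [/\ is_max_nat Q w, (u <= w)%nat & (w <= v)%nat].
Proof.
move=> PQ QR [Pu _] [_ maxv].
have [w [Qw maxw]] := is_max_nat_exists (PQ u Pu) (fun n Qn => maxv n (QR n Qn)).
by exists w; split=> //; [apply: maxw; apply: PQ | apply: maxv; apply: QR].
Qed.

End Maxima.

Section CriticalExponents.
Variables (A : comNzRingType) (p : nat) (a : A -> Prop).
Hypothesis pchar_p : p \in GRing.pchar A.
Implicit Types (I J b : A -> Prop) (s : seq A) (l : R).
Local Open Scope R_scope.

Lemma c_is_ext b b' l : (forall x, b x <-> b' x) -> c_is p a b l -> c_is p a b' l.
Proof.
move=> bb' [u [nu_u cv_u]]; exists u; split=> // e.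
apply: is_max_nat_ext (nu_u e) => t; split=> nsub sub; apply: nsub => x /sub;
  by apply: frob_pow_mono => y /bb'.
Qed.

Lemma c_is_unique b l l' : c_is p a b l -> c_is p a b l' -> l = l'.
Proof.
move=> [u [nu_u cv_u]] [u' [nu_u' cv_u']]; apply: UL_sequence cv_u _.
by apply: Un_cv_ext cv_u' => e; rewrite (is_max_nat_unique (nu_u e) (nu_u' e)).
Qed.

Lemma c_is_frob_pow J l e :
  c_is p a J l -> c_is p a (frob_pow J (expn p e)) (INR (expn p e) * l).
Proof.
move=> [u [nu_u cv_u]]; exists (fun e' => u (e + e')%nat); split; last first.
  exact: Un_cv_shift_scale (prime_gt0 (pcharf_prime pchar_p)) cv_u.
move=> e'; apply: is_max_nat_ext (nu_u (e + e')%nat) => t.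
by split=> nsub sub; apply: nsub => x /sub /(frob_pow_frob_pow pchar_p).
Qed.

Lemma c_is_Je J l e : is_ideal J ->
  ct_is p a J l -> c_is p a J l -> c_is p a (Je p e J) (INR (expn p e) * l).
Proof.
move=> idJ [u [bJ_u cv_u]] [v [nu_v cv_v]].
have between e' : exists w, [/\ nu p a (Je p e J) e' w,
    (u (e + e')%nat <= w)%nat & (w <= v (e + e')%nat)%nat].
  apply: is_max_nat_between (bJ_u (e + e')%nat) (nu_v (e + e')%nat) => t nsub sub;
    apply: nsub => x /sub.
  - exact: frob_pow_Je_sub.
  - move/(frob_pow_frob_pow pchar_p).
    by apply: frob_pow_mono; apply: frob_pow_sub_Je.
have [w /all_and3[nu_w uw wv]] := choice _ between.
have p_gt0 := prime_gt0 (pcharf_prime pchar_p).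
exists w; split=> //.
apply: Un_cv_squeeze (Un_cv_shift_scale e p_gt0 cv_u) (Un_cv_shift_scale e p_gt0 cv_v).
by move=> e'; split; apply: Rdiv_INR_le.
Qed.

Lemma c_is_le_of_ideal_pow_sub I s m l :
  (forall x, a x <-> gen_ideal (fun y => y \in s) x) -> psubset (ideal_pow a m) I ->
  c_is p a I l -> l <= INR (m + size s).
Proof.
move=> a_s amI [u [nu_u cv_u]]; apply: Rle_cv_lim cv_u (Un_cv_const _) => e.
have u_lt : (u e < (m + size s) * expn p e)%nat.
  rewrite ltnNge; apply/negP => le_u; apply: (nu_u e).1 => x /(ideal_pow_antitone le_u).
  exact: ideal_pow_sub_frob_pow a_s (expn_pchar_gt0 pchar_p e) amI x.
apply: Rle_trans (Rdiv_INR_le _ (ltnW u_lt)) _.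
have := INR_expn_gt0 e (prime_gt0 (pcharf_prime pchar_p)).
by rewrite mult_INR => ?; right; field; lra.
Qed.

Lemma ct_is_of_c_is_Je J s l : is_ideal J ->
  (forall x, a x <-> gen_ideal (fun y => y \in s) x) ->
  (forall e, c_is p a (Je p e J) (INR (expn p e) * l)) -> c_is p a J l -> ct_is p a J l.
Proof.
move=> idJ a_s c_Je [v [nu_v cv_v]].
have bJ_ex e : exists m, bJ p a J e m.
  have [u [nu_u _]] := c_Je e; exists (u 0%nat).
  apply: is_max_nat_ext (nu_u 0%nat) => t.
  by split=> nsub sub; apply: nsub => x /sub /(frob_pow1 _ (Je_is_ideal p e idJ)).
have [b bJ_b] := choice _ bJ_ex.
exists b; split=> //.
have p_gt1 := prime_gt1 (pcharf_prime pchar_p).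
pose C := INR (1 + size s).
have cv_low : Un_cv (fun e => l - C / INR (expn p e)) l.
  by have := CV_minus _ _ _ _ (Un_cv_const l) (Un_cv_div_expn C p_gt1); rewrite Rminus_0_r.
apply: Un_cv_squeeze cv_low cv_v => e; split.
- have pow_sub : psubset (ideal_pow a (b e).+1) (Je p e J).
    by apply: NNPP => nsub; have := (bJ_b e).2 _ nsub; rewrite ltnn.
  have := c_is_le_of_ideal_pow_sub a_s pow_sub (c_Je e).
  have := INR_expn_gt0 e (ltnW p_gt1).
  rewrite -addn1 -addnA plus_INR -/C; set q := INR (expn p e) => q_gt0 bound.
  have -> : l - C / q = (q * l - C) / q by field; lra.
  by apply: Rmult_le_compat_r; [apply/Rlt_le/Rinv_0_lt_compat | lra].
- apply: Rdiv_INR_le; apply: (nu_v e).2 => sub; apply: (bJ_b e).1 => x /sub.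
  exact: frob_pow_sub_Je.
Qed.

End CriticalExponents.

Theorem mainTheorem18 (A : comNzRingType) (p : nat)
  (hp : prime p) (hchar : p \in GRing.pchar A)
  (hFfin : F_finite A p) (hFpure : F_pure A p)
  (a J : A -> Prop) (ha : is_ideal a) (hJ : is_ideal J)
  (haJ : psubset a (radical J)) :
  (exists l : R, ct_is p a J l /\ c_is p a J l) <->
  (forall e : nat, exists l : R,
     c_is p a (Je p e J) l /\ c_is p a (frob_pow J (expn p e)) l).
Proof.
have [s a_s] := hFfin.1 a ha.
split=> [[l [ct_l c_l]] e | c_J].
  exists (INR (expn p e) * l)%R.
  by split; [apply: (c_is_Je hchar) | apply: (c_is_frob_pow hchar)].
have [l [_ c_frob0]] := c_J 0%nat.
have c_l : c_is p a J l by apply: c_is_ext _ c_frob0 => x; apply: frob_pow1.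
exists l; split=> //; apply: (ct_is_of_c_is_Je hchar hJ a_s _ c_l) => e.
have [l' [c_Je c_frob]] := c_J e.
by rewrite (c_is_unique c_frob (c_is_frob_pow hchar e c_l)) in c_Je.
Qed.
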